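(* Suppose that $(A_1,B_1)$ and $(A_2,B_2)$ are pairs of Gram mates (that are not necessarily square matrices). Then, we have the following pairs of Gram mates: $$\left(\begin{bmatrix} A_1 & 0\\ 0 & A_2 \end{bmatrix},\begin{bmatrix} B_1 & 0\\ 0 & B_2 \end{bmatrix}\right)\;\text{and}\;\left(\begin{bmatrix} A_1 & J\\ J & A_2 \end{bmatrix},\begin{bmatrix} B_1 & J\\ J & B_2 \end{bmatrix}\right).$$
   Context: $J$ denotes the all-ones matrix of the appropriate size. Two $(0,1)$ matrices $A\neq B$ are Gram mates if $AA^T=BB^T$ and $A^TA=B^TB$. *)

From HB Require Import structures.
From mathcomp Require Import all_boot all_order all_algebra.
Set Implicit Arguments. Unset Strict Implicit. Unset Printing Implicit Defensive.
Import Order.TTheory GRing.Theory Num.Theory.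
Local Open Scope ring_scope.

Definition zero_one_mx (m n : nat) (A : 'M[int]_(m, n)) : Prop :=
  forall i j, A i j = 0 \/ A i j = 1.

Definition gram_mates (m n : nat) (A B : 'M[int]_(m, n)) : Prop :=
  [/\ zero_one_mx A, zero_one_mx B, A <> B,
      A *m A^T = B *m B^T & A^T *m A = B^T *m B].

Definition Jmx (m n : nat) : 'M[int]_(m, n) := const_mx 1.

From mathcomp Require Import all_boot all_order all_algebra.
Import GRing.Theory.
Local Open Scope ring_scope.

(* For a (0,1) matrix A the row sums are the diagonal entries of A A^T, so
   Gram mates have the same row sums and, transposing, the same column sums.
   A product of A with a constant matrix depends on A only through its row
   sums, hence the Gram matrices of the block matrices with constant
   off-diagonal blocks agree block by block. *)

Section ZeroOne.

Context {m n : nat}.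
Implicit Types A B : 'M[int]_(m, n).

Lemma zero_one_mx_tr A : zero_one_mx A -> zero_one_mx A^T.
Proof. by move=> hA i j; rewrite mxE. Qed.

Lemma zero_one_const_mx (c : int) :
  c = 0 \/ c = 1 -> zero_one_mx (const_mx c : 'M_(m, n)).
Proof. by move=> hc i j; rewrite mxE. Qed.

Lemma mulmx_const_zero_one p (c : int) A : zero_one_mx A ->
  A *m (const_mx c : 'M_(n, p)) = \matrix_(i, j) (c * (A *m A^T) i i).
Proof.
move=> hA; apply/matrixP => i j; rewrite !mxE mulr_sumr.
apply: eq_bigr => k _; rewrite !mxE.
by case: (hA i k) => ->; rewrite ?mul0r ?mulr0 ?mul1r ?mulr1.
Qed.

Lemma gram_eq_mulmx_const p (c : int) {A B} :
  zero_one_mx A -> zero_one_mx B -> A *m A^T = B *m B^T ->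
  A *m (const_mx c : 'M_(n, p)) = B *m const_mx c.
Proof. by move=> hA hB eqAB; rewrite !mulmx_const_zero_one // eqAB. Qed.

Lemma gram_eq_const_mulmx p (c : int) {A B} :
  zero_one_mx A -> zero_one_mx B -> A *m A^T = B *m B^T ->
  (const_mx c : 'M_(p, n)) *m A^T = const_mx c *m B^T.
Proof.
move=> hA hB eqAB; apply: trmx_inj.
by rewrite !trmx_mul !trmxK trmx_const (gram_eq_mulmx_const _ _ hA hB eqAB).
Qed.

Lemma gram_mates_tr {A B} : gram_mates A B -> gram_mates A^T B^T.
Proof.
case=> hA hB neqAB eqAAt eqAtA; split; rewrite ?trmxK //;
  [exact: zero_one_mx_tr | exact: zero_one_mx_tr | by move/trmx_inj].
Qed.

End ZeroOne.

Lemma zero_one_block_mx m1 m2 n1 n2 (A : 'M[int]_(m1, n1)) (B : 'M[int]_(m1, n2))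
  (C : 'M[int]_(m2, n1)) (D : 'M[int]_(m2, n2)) :
  zero_one_mx A -> zero_one_mx B -> zero_one_mx C -> zero_one_mx D ->
  zero_one_mx (block_mx A B C D).
Proof.
move=> hA hB hC hD i j.
by case: (split_ordP i) => i' ->; case: (split_ordP j) => j' ->;
  rewrite ?block_mxEul ?block_mxEur ?block_mxEdl ?block_mxEdr.
Qed.

Definition block_const_mx {m1 n1 m2 n2} (c : int)
    (A1 : 'M[int]_(m1, n1)) (A2 : 'M[int]_(m2, n2)) :=
  block_mx A1 (const_mx c) (const_mx c) A2.

Lemma tr_block_const_mx m1 n1 m2 n2 c
    (A1 : 'M[int]_(m1, n1)) (A2 : 'M[int]_(m2, n2)) :
  (block_const_mx c A1 A2)^T = block_const_mx c A1^T A2^T.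
Proof. by rewrite tr_block_mx !trmx_const. Qed.

Lemma block_const_mx_gram_eq {m1 n1 m2 n2} (c : int)
    {A1 B1 : 'M[int]_(m1, n1)} {A2 B2 : 'M[int]_(m2, n2)} :
  zero_one_mx A1 -> zero_one_mx B1 -> zero_one_mx A2 -> zero_one_mx B2 ->
  A1 *m A1^T = B1 *m B1^T -> A2 *m A2^T = B2 *m B2^T ->
  block_const_mx c A1 A2 *m (block_const_mx c A1 A2)^T =
  block_const_mx c B1 B2 *m (block_const_mx c B1 B2)^T.
Proof.
move=> hA1 hB1 hA2 hB2 eq1 eq2.
rewrite !tr_block_const_mx /block_const_mx !mulmx_block eq1 eq2.
by rewrite (gram_eq_mulmx_const _ _ hA1 hB1 eq1) (gram_eq_mulmx_const _ _ hA2 hB2 eq2)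
  (gram_eq_const_mulmx _ _ hA1 hB1 eq1) (gram_eq_const_mulmx _ _ hA2 hB2 eq2).
Qed.

Lemma gram_mates_block_const {m1 n1 m2 n2} (c : int)
  {A1 B1 : 'M[int]_(m1, n1)} {A2 B2 : 'M[int]_(m2, n2)} :
  c = 0 \/ c = 1 -> gram_mates A1 B1 -> gram_mates A2 B2 ->
  gram_mates (block_const_mx c A1 A2) (block_const_mx c B1 B2).
Proof.
move=> hc gram1 gram2.
have [hA1 hB1 neq1 row1 _] := gram1; have [hA2 hB2 _ row2 _] := gram2.
have [hA1t hB1t _ col1 _] := gram_mates_tr gram1.
have [hA2t hB2t _ col2 _] := gram_mates_tr gram2.
have zero_one_block A B : zero_one_mx A -> zero_one_mx B ->
    zero_one_mx (block_const_mx c A B).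
  by move=> hA hB; apply: zero_one_block_mx => //; apply: zero_one_const_mx.
split; [exact: zero_one_block | exact: zero_one_block | |
        exact: block_const_mx_gram_eq | ].
- by move/eq_block_mx => [/neq1].
- have := block_const_mx_gram_eq c hA1t hB1t hA2t hB2t col1 col2.
  by rewrite !tr_block_const_mx !trmxK.
Qed.

Theorem proposition5p2 (m1 n1 m2 n2 : nat)
  (A1 B1 : 'M[int]_(m1, n1)) (A2 B2 : 'M[int]_(m2, n2)) :
  gram_mates A1 B1 -> gram_mates A2 B2 ->
  gram_mates (block_mx A1 0 0 A2) (block_mx B1 0 0 B2) /\
  gram_mates (block_mx A1 (Jmx m1 n2) (Jmx m2 n1) A2)
             (block_mx B1 (Jmx m1 n2) (Jmx m2 n1) B2).
Proof.
move=> gram1 gram2; split.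
(* The zero matrix and [Jmx] are [const_mx 0] and [const_mx 1] by definition. *)
- exact: gram_mates_block_const _ (or_introl erefl) gram1 gram2.
- exact: gram_mates_block_const _ (or_intror erefl) gram1 gram2.
Qed.
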